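(* Let $s_+,s_-\in\mathbb{R}^2$ be distinct, and let $\mathcal{C}_{s_+,s_-}=\{x\mapsto\mathrm{sign}(w^\top x-b): w\in\mathbb{R}^2,\ b\in\mathbb{R},\ w^\top s_+\ge b> w^\top s_-\}$ be the class of two-dimensional $\{(s_+,+1),(s_-,-1)\}$-halfspaces on $\mathcal{X}=\mathbb{R}^2$. Then $(\mathcal{C}_{s_+,s_-},\mathbb{R}^2)$ has certificate dimension $3$ with parameters $m=7$ and $n=3$.
   Context: $\mathrm{sign}(z)=+1$ if $z\ge0$ and $-1$ if $z<0$. Notation: $\mathcal{L}=\mathcal{X}\times\{\pm1\}$; $\mathcal{P}_n(\mathcal{L})$ = $n$-element subsets of $\mathcal{L}$. For finite $S\subseteq\mathcal{L}$, $\mathcal{V}(S)=\{h\in\mathcal{C}: h(x)=y\ \forall (x,y)\in S\}$ (with $\mathcal{C}$ the class under consideration). A set of labeled examples is ''labeled by $h$'' if $y=h(x)$ for each of its elements. Certificate dimension: $(\mathcal{C},\mathcal{X})$ has certificate dimension $k$ with parameters $(m,n)$ (integers $m,n\ge1$) if there is a function $\sigma:\mathcal{C}\times\mathcal{P}_{k-1}(\mathcal{L})\to\{0,1,\dots,n-1\}$ such that for every $h\in\mathcal{C}$ and every $S\subseteq\mathcal{L}$ with $|S|=m$ labeled by $h$, there exist $U\subseteq S$ with $|U|=k$ and $(x,y)\in U$ such that for every $h'\in\mathcal{V}(S\setminus\{(x,y)\})$: $\sigma(h',U\setminus\{(x,y)\})=\sigma(h,U\setminus\{(x,y)\})\Rightarrow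 h'(x)=h(x)=y$. *)

From Stdlib Require Import Reals List.
Import ListNotations.
Open Scope R_scope.

Definition pt : Type := (R * R)%type.

(* Labels {+1,-1} are encoded as bool: true = +1, false = -1. *)
Definition sgn (z : R) : bool := if Rle_dec 0 z then true else false.

Definition dot (w x : pt) : R := fst w * fst x + snd w * snd x.

Definition halfspace_class (sp sm : pt) (h : pt -> bool) : Prop :=
  exists (w : pt) (b : R),
    dot w sp >= b /\ b > dot w sm /\ h = (fun x => sgn (dot w x - b)).

Definition card_is {T : Type} (A : T -> Prop) (n : nat) : Prop :=
  exists l : list T, NoDup l /\ length l = n /\ forall z, A z <-> In z l.

(* Labeled examples L = X * bool; sets of labeled examples are predicates.
   sigma is given as a total function; its values are in {0,...,n-1}. *)
Definition cert_dim {X : Type} (C : (X -> bool) -> Prop) (k m n : nat) : Prop :=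
  exists sigma : (X -> bool) -> (X * bool -> Prop) -> nat,
    (forall h A, (sigma h A < n)%nat) /\
    forall h : X -> bool, C h ->
    forall S : X * bool -> Prop,
      card_is S m ->
      (forall x y, S (x, y) -> h x = y) ->
      exists U : X * bool -> Prop,
        (forall z, U z -> S z) /\ card_is U k /\
        exists (x : X) (y : bool), U (x, y) /\
          forall h' : X -> bool, C h' ->
            (forall x' y', S (x', y') -> (x', y') <> (x, y) -> h' x' = y') ->
            sigma h' (fun z => U z /\ z <> (x, y)) =
              sigma h (fun z => U z /\ z <> (x, y)) ->
            h' x = h x /\ h x = y.

(* Rotating and rescaling the plane puts every halfspace of the class in the form
   x |-> sgn (along x - u * across x - t), where [along] is the coordinate in the
   direction s+ - s- and [across] the orthogonal one.  Among seven labelled points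
   four carry a common label y.  If two of them share their [across] coordinate,
   the label of one forces the label of the other.  Otherwise order them
   p1, p2, p3, p4 by [across].  Unless y at p1, p3 forces y at p2, or y at p2, p4
   forces y at p3, there are halfspaces of slopes u2 and u3 realising these two
   dips.  For a halfspace labelling p2 and p3 by y, the sign of
   level p3 - level p2 (the one bit [sigma] stores about {p2, p3}) compares its
   slope with u3 when it is nonnegative, forcing y at p4, and with u2 otherwise,
   forcing y at p1. *)
From Stdlib Require Import Reals Lra Psatz List Sorted Classical ClassicalEpsilon
  FunctionalExtensionality PropExtensionality.
Import ListNotations.
Open Scope R_scope.

Definition certificate {X : Type} (C : (X -> bool) -> Prop)
    (sigma : (X -> bool) -> (X * bool -> Prop) -> nat) (k : nat)
    (h : X -> bool) (S : X * bool -> Prop) : Prop :=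
  exists U : X * bool -> Prop,
    (forall z, U z -> S z) /\ card_is U k /\
    exists (x : X) (y : bool), U (x, y) /\
      forall h' : X -> bool, C h' ->
        (forall x' y', S (x', y') -> (x', y') <> (x, y) -> h' x' = y') ->
        sigma h' (fun z => U z /\ z <> (x, y)) =
          sigma h (fun z => U z /\ z <> (x, y)) ->
        h' x = h x /\ h x = y.

Lemma certificate_of_triple {X : Type} C sigma (h : X -> bool) S (A B Z : X * bool) :
  S A -> S B -> S Z -> A <> B -> A <> Z -> B <> Z ->
  (forall x y, S (x, y) -> h x = y) ->
  (forall h', C h' -> h' (fst A) = snd A -> h' (fst B) = snd B ->
     sigma h' (fun z => z = A \/ z = B) = sigma h (fun z => z = A \/ z = B) ->
     h' (fst Z) = snd Z) ->
  certificate C sigma 3 h S.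
Proof.
  destruct A as [a ya], B as [b yb], Z as [x y]; simpl.
  intros SA SB SZ nAB nAZ nBZ Hlab Hforce.
  set (U := fun z => z = (a, ya) \/ z = (b, yb) \/ z = (x, y)).
  assert (HU : (fun z => U z /\ z <> (x, y)) = (fun z => z = (a, ya) \/ z = (b, yb))).
  { apply functional_extensionality; intros z; apply propositional_extensionality.
    unfold U; split; [intros [[?|[?|?]] ?]; tauto | intros [-> | ->]; auto]. }
  exists U; split; [|split].
  - intros z [-> | [-> | ->]]; assumption.
  - exists [(a, ya); (b, yb); (x, y)]; split; [|split; [reflexivity|]].
    + repeat constructor; simpl; intuition congruence.
    + intros z; unfold U; simpl; intuition.
  - exists x, y; split; [unfold U; auto|].
    intros h' Ch' Hcons Hsig; rewrite HU in Hsig.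
    rewrite (Hlab x y SZ); split; [|reflexivity].
    apply Hforce; auto; apply Hcons; congruence.
Qed.

Lemma majority_label {X : Type} (l : list (X * bool)) (n : nat) :
  (2 * n <= length l + 1)%nat ->
  exists y, (n <= length (filter (fun z => Bool.eqb (snd z) y) l))%nat.
Proof.
  intros Hl; pose proof (filter_length snd l) as Hsplit.
  destruct (Nat.le_gt_cases n (length (filter snd l))) as [Hn|Hn].
  - exists true; erewrite filter_ext; [exact Hn|]; intros [? []]; reflexivity.
  - exists false; erewrite filter_ext with (g := fun z => negb (snd z)); [lia|].
    intros [? []]; reflexivity.
Qed.

Lemma four_points_same_label {X : Type} (S : X * bool -> Prop) :
  card_is S 7 ->
  exists y ps, NoDup ps /\ (4 <= length ps)%nat /\ forall p, In p ps -> S (p, y).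
Proof.
  intros (l & Hnd & Hlen & HS).
  destruct (majority_label l 4) as [y Hy]; [lia|].
  exists y, (map fst (filter (fun z => Bool.eqb (snd z) y) l)); split; [|split].
  - apply NoDup_map_NoDup_ForallPairs; [|apply NoDup_filter, Hnd].
    intros [a ya] [b yb] Ha Hb; simpl; intros ->.
    apply filter_In in Ha as [_ Ha], Hb as [_ Hb]; simpl in Ha, Hb.
    apply Bool.eqb_prop in Ha, Hb; congruence.
  - rewrite length_map; exact Hy.
  - intros p Hp; apply in_map_iff in Hp as ([q yq] & <- & Hq).
    apply filter_In in Hq as [Hq Hyq]; simpl in Hyq; apply Bool.eqb_prop in Hyq.
    apply HS; subst; exact Hq.
Qed.

Lemma equal_keys_or_NoDup {T : Type} (k : T -> R) (l : list T) :
  NoDup l -> (exists a b, In a l /\ In b l /\ a <> b /\ k a = k b) \/ NoDup (map k l).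
Proof.
  induction 1 as [|a l Ha Hnd IH]; [right; constructor|].
  destruct (classic (In (k a) (map k l))) as [Hin|Hnin].
  - left; apply in_map_iff in Hin as (b & Hb & Hbl).
    exists a, b; simpl; repeat split; auto; intros ->; contradiction.
  - destruct IH as [(b & c & Hb & Hc & Hbc & Hk) | IH].
    + left; exists b, c; simpl; auto.
    + right; constructor; assumption.
Qed.

Lemma third_element {T : Type} (l : list T) (a b : T) :
  NoDup l -> (3 <= length l)%nat -> exists c, In c l /\ c <> a /\ c <> b.
Proof.
  intros Hnd Hlen; apply NNPP; intros Hno.
  assert (Hincl : incl l [a; b]).
  { intros c Hc; apply NNPP; intros Hab; apply Hno.
    exists c; split; [exact Hc|]; split; intros ->; apply Hab; simpl; auto. }
  apply NoDup_incl_length in Hincl; [simpl in Hincl; lia | exact Hnd].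
Qed.

Section IncreasingChain.

Variables (T : Type) (k : T -> R).

Let increasing := StronglySorted (fun p q => k p < k q).

Lemma insert_increasing (a : T) (c : list T) :
  ~ In (k a) (map k c) -> increasing c ->
  exists c', incl c' (a :: c) /\ length c' = S (length c) /\ increasing c'.
Proof.
  induction c as [|b c IH]; intros Hnin Hs.
  - exists [a]; split; [apply incl_refl|]; split; [reflexivity|].
    repeat constructor.
  - apply StronglySorted_inv in Hs as [Hs Hb]; simpl in Hnin.
    destruct (Rlt_or_le (k a) (k b)) as [Hab|Hba].
    + exists (a :: b :: c); split; [apply incl_refl|]; split; [reflexivity|].
      constructor; [constructor; assumption|].
      constructor; [exact Hab|]; refine (Forall_impl _ _ Hb); intros; lra.
    + destruct IH as (c' & Hinc & Hlen & Hs'); [tauto | exact Hs |].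
      exists (b :: c'); split; [|split; [simpl; congruence|]].
      * intros x [<- | Hx]; [simpl; auto|].
        destruct (Hinc x Hx) as [<- | Hxc]; simpl; auto.
      * constructor; [exact Hs'|]; apply Forall_forall; intros x Hx.
        destruct (Hinc x Hx) as [<- | Hxc].
        -- destruct (Req_dec (k b) (k a)); [tauto | lra].
        -- rewrite Forall_forall in Hb; auto.
Qed.

Lemma increasing_sublist (l : list T) :
  NoDup (map k l) -> exists c, incl c l /\ length c = length l /\ increasing c.
Proof.
  induction l as [|a l IH]; simpl; intros Hnd.
  - exists []; split; [apply incl_refl|]; split; [reflexivity | constructor].
  - apply NoDup_cons_iff in Hnd as [Hnin Hnd].
    destruct (IH Hnd) as (c & Hinc & Hlen & Hs).
    destruct (insert_increasing a c) as (c' & Hinc' & Hlen' & Hs'); [|exact Hs|].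
    + rewrite in_map_iff; intros (x & Hx & Hxc); apply Hnin.
      rewrite <- Hx; apply in_map, Hinc, Hxc.
    + exists c'; split; [|split; [congruence | exact Hs']].
      apply (incl_tran Hinc'), incl_cons; [left; reflexivity | apply incl_tl, Hinc].
Qed.

Lemma equal_keys_or_increasing4 (l : list T) :
  NoDup l -> (4 <= length l)%nat ->
  (exists a b c, In a l /\ In b l /\ In c l /\
     a <> b /\ c <> a /\ c <> b /\ k a = k b) \/
  (exists p1 p2 p3 p4, In p1 l /\ In p2 l /\ In p3 l /\ In p4 l /\
     k p1 < k p2 /\ k p2 < k p3 /\ k p3 < k p4).
Proof.
  intros Hnd Hlen.
  destruct (equal_keys_or_NoDup k l Hnd) as [(a & b & Ha & Hb & Hab & Hk) | Hkeys].
  - destruct (third_element l a b Hnd) as (c & Hc & Hca & Hcb); [lia|].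
    left; exists a, b, c; auto 7.
  - right; destruct (increasing_sublist l Hkeys) as (c & Hinc & Hlenc & Hs).
    destruct c as [|p1 [|p2 [|p3 [|p4 c]]]]; simpl in Hlenc; try lia.
    apply StronglySorted_Sorted in Hs.
    apply Sorted_inv in Hs as [Hs H12]; apply Sorted_inv in Hs as [Hs H23].
    apply Sorted_inv in Hs as [_ H34]; apply HdRel_inv in H12, H23, H34.
    exists p1, p2, p3, p4; repeat split; auto; apply Hinc; simpl; auto.
Qed.

End IncreasingChain.

Lemma sgn_true z : sgn z = true <-> 0 <= z.
Proof. unfold sgn; destruct (Rle_dec 0 z); split; intros; congruence || lra. Qed.

Lemma sgn_false z : sgn z = false <-> z < 0.
Proof. unfold sgn; destruct (Rle_dec 0 z); split; intros; congruence || lra. Qed.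

Lemma sgn_pos_multiple k z z' : 0 < k -> z = k * z' -> sgn z = sgn z'.
Proof.
  intros Hk ->; destruct (Rle_or_lt 0 z').
  - rewrite (proj2 (sgn_true z')), sgn_true; [nra | assumption].
  - rewrite (proj2 (sgn_false z')), sgn_false; [nra | assumption].
Qed.

Lemma exists_large_multiple c g : 0 < g -> exists l, 0 <= l /\ c < l * g.
Proof.
  intros Hg; exists ((Rabs c + 1) / g); split.
  - pose proof (Rabs_pos c); apply Rle_mult_inv_pos; lra.
  - unfold Rdiv; rewrite Rmult_assoc, Rinv_l, Rmult_1_r by lra.
    pose proof (Rle_abs c); lra.
Qed.

Definition signed (y : bool) (z : R) : R := if y then z else - z.

Lemma signed_opp y z : signed y (- z) = - signed y z.
Proof. destruct y; simpl; ring. Qed.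

Definition ray (a b : pt) (l : R) : pt :=
  (fst a + l * (fst b - fst a), snd a + l * (snd b - snd a)).

Definition stays (h : pt -> bool) (a b : pt) (y : bool) : Prop :=
  forall l, 0 <= l -> h (ray a b l) = y.

Section Halfspaces.

Variables sp sm : pt.
Hypothesis sp_neq_sm : sp <> sm.

Definition along (p : pt) : R :=
  (fst p - fst sm) * (fst sp - fst sm) + (snd p - snd sm) * (snd sp - snd sm).

Definition across (p : pt) : R :=
  (snd p - snd sm) * (fst sp - fst sm) - (fst p - fst sm) * (snd sp - snd sm).

Definition level (u : R) (p : pt) : R := along p - u * across p.

Definition gap (u : R) (p q : pt) : R := level u q - level u p.

Definition represents (h : pt -> bool) (u t : R) : Prop :=
  forall x, h x = sgn (level u x - t).

Lemma halfspace_normal_form h :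
  halfspace_class sp sm h -> exists u t, represents h u t.
Proof.
  intros [w [b [Hsp [Hsm ->]]]].
  assert (Hn : 0 < (fst sp - fst sm) ^ 2 + (snd sp - snd sm) ^ 2).
  { destruct (Req_dec (fst sp) (fst sm)), (Req_dec (snd sp) (snd sm)); try nra.
    exfalso; apply sp_neq_sm, injective_projections; assumption. }
  unfold represents, dot, level, along, across in *.
  set (s1 := fst sp) in *; set (s2 := snd sp) in *.
  set (m1 := fst sm) in *; set (m2 := snd sm) in *.
  set (w1 := fst w) in *; set (w2 := snd w) in *.
  set (n := (s1 - m1) ^ 2 + (s2 - m2) ^ 2) in *.
  set (wa := w1 * (s1 - m1) + w2 * (s2 - m2)).
  assert (Hwa : 0 < wa) by (unfold wa; lra).
  set (wc := - w1 * (s2 - m2) + w2 * (s1 - m1)).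
  exists (- wc / wa), (n * (b - (w1 * m1 + w2 * m2)) / wa).
  intros x; apply (sgn_pos_multiple (wa / n)); [apply Rdiv_lt_0_compat; assumption|].
  unfold wa, wc, n in *; field; split; lra.
Qed.

Lemma gap_shift u v p q : gap u p q = gap v p q + (v - u) * (across q - across p).
Proof. unfold gap, level; ring. Qed.

Lemma gap_swap u p q : gap u q p = - gap u p q.
Proof. unfold gap; ring. Qed.

Lemma gap_of_across_eq u p q : across p = across q -> gap u p q = along q - along p.
Proof. intros Hpq; unfold gap, level; rewrite Hpq; ring. Qed.

(* The slope u of a halfspace is read off, monotonically, from the signed gap of
   any pair that is increasing in [across]. *)
Lemma gap_transfer y u v p q p' q' :
  across p < across q -> across p' < across q' ->
  signed y (gap v p q) < signed y (gap u p q) ->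
  signed y (gap v p' q') < signed y (gap u p' q').
Proof.
  intros Hpq Hpq'; rewrite (gap_shift u v p q), (gap_shift u v p' q').
  destruct y; simpl; intros Hlt; nra.
Qed.

Lemma label_mono h u t y a b :
  represents h u t -> h a = y -> 0 <= signed y (gap u a b) -> h b = y.
Proof.
  intros R Ha; rewrite R in Ha |- *; unfold gap; destruct y; simpl.
  - rewrite sgn_true in Ha |- *; lra.
  - rewrite sgn_false in Ha |- *; lra.
Qed.

Lemma labels_dip h u t y a b c :
  represents h u t -> h a = y -> h b <> y -> h c = y ->
  signed y (gap u a b) < 0 /\ 0 < signed y (gap u b c).
Proof.
  intros R; rewrite !R; unfold gap; destruct y; simpl.
  - rewrite !sgn_true; lra.
  - rewrite !sgn_false; lra.
Qed.

Lemma level_ray u a b l : level u (ray a b l) = level u a + l * gap u a b.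
Proof. unfold gap, level, along, across, ray; simpl; ring. Qed.

Lemma stays_iff h u t y a b :
  represents h u t -> h a = y -> (stays h a b y <-> 0 <= signed y (gap u a b)).
Proof.
  intros R Ha; unfold stays; rewrite R in Ha.
  split; [intros Hs | intros Hg l Hl; rewrite R, level_ray].
  - apply Rnot_lt_le; intros Hneg; destruct y; simpl in *.
    + destruct (exists_large_multiple (level u a - t) (- gap u a b)) as (l & Hl & Hc);
        [lra|].
      specialize (Hs l Hl); rewrite R, level_ray, sgn_true in Hs; lra.
    + destruct (exists_large_multiple (t - level u a) (gap u a b)) as (l & Hl & Hc);
        [lra|].
      specialize (Hs l Hl); rewrite R, level_ray, sgn_false in Hs; lra.
  - destruct y; simpl in *.
    + rewrite sgn_true in Ha |- *; nra.
    + rewrite sgn_false in Ha |- *; nra.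
Qed.

(* Only the sign of [signed y (gap u a b)] matters, and [stays] reads it off h
   without choosing a representation (u, t) of h. *)
Definition sigma (h : pt -> bool) (P : pt * bool -> Prop) : nat :=
  if excluded_middle_informative
       (exists a b y, P (a, y) /\ P (b, y) /\ across a < across b /\ stays h a b y)
  then 1%nat else 0%nat.

Lemma sigma_lt_2 h P : (sigma h P < 2)%nat.
Proof. unfold sigma; destruct excluded_middle_informative; auto. Qed.

Lemma sigma_pair_iff h u t y a b :
  represents h u t -> h a = y -> across a < across b ->
  (sigma h (fun z => z = (a, y) \/ z = (b, y)) = 1%nat <-> 0 <= signed y (gap u a b)).
Proof.
  intros R Ha Hab; rewrite <- (stays_iff h u t y a b R Ha); unfold sigma.
  destruct excluded_middle_informative as [(a' & b' & y' & Pa & Pb & Hlt & Hs) | Hno].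
  - split; [intros _ | reflexivity].
    destruct Pa as [Pa | Pa], Pb as [Pb | Pb]; injection Pa; injection Pb;
      intros; subst; assumption || lra.
  - split; [discriminate | intros Hs; exfalso; apply Hno; exists a, b, y; auto].
Qed.

Lemma sigma_pair_agree h h' u t u' t' y a b :
  represents h u t -> represents h' u' t' -> h a = y -> h' a = y ->
  across a < across b ->
  sigma h' (fun z => z = (a, y) \/ z = (b, y)) = sigma h (fun z => z = (a, y) \/ z = (b, y)) ->
  (0 <= signed y (gap u' a b) <-> 0 <= signed y (gap u a b)).
Proof.
  intros R R' Ha Ha' Hab Hsig.
  rewrite <- (sigma_pair_iff h' u' t' y a b R' Ha' Hab), Hsig.
  apply (sigma_pair_iff h u t y a b R Ha Hab).
Qed.

Lemma equal_across_certificate h S y a b c :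
  (forall x y, S (x, y) -> h x = y) -> S (a, y) -> S (b, y) -> S (c, y) ->
  a <> b -> c <> a -> c <> b -> across a = across b ->
  certificate (halfspace_class sp sm) sigma 3 h S.
Proof.
  intros Hlab Sa Sb Sc nab nca ncb Hab.
  destruct (Rle_or_lt 0 (signed y (along b - along a))) as [Hy | Hy].
  - apply (certificate_of_triple _ _ h S (a, y) (c, y) (b, y)); auto; try congruence.
    simpl; intros h' Ch' Ha _ _.
    destruct (halfspace_normal_form h' Ch') as (u & t & R).
    apply (label_mono h' u t y a b R Ha); rewrite gap_of_across_eq; assumption.
  - apply (certificate_of_triple _ _ h S (b, y) (c, y) (a, y)); auto; try congruence.
    simpl; intros h' Ch' Hb _ _.
    destruct (halfspace_normal_form h' Ch') as (u & t & R).
    apply (label_mono h' u t y b a R Hb); rewrite gap_of_across_eq by congruence.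
    replace (along a - along b) with (- (along b - along a)) by ring.
    rewrite signed_opp; lra.
Qed.

Lemma certificate_or_dip h S y a z b :
  (forall x y, S (x, y) -> h x = y) -> S (a, y) -> S (z, y) -> S (b, y) ->
  a <> z -> a <> b -> z <> b ->
  certificate (halfspace_class sp sm) sigma 3 h S \/
  exists h', halfspace_class sp sm h' /\ h' a = y /\ h' z <> y /\ h' b = y.
Proof.
  intros Hlab Sa Sz Sb naz nab nzb.
  destruct (classic (exists h', halfspace_class sp sm h' /\
                       h' a = y /\ h' z <> y /\ h' b = y)) as [W | NW]; [right; exact W|].
  left; apply (certificate_of_triple _ _ h S (a, y) (b, y) (z, y)); auto; try congruence.
  simpl; intros h' Ch' Ha Hb _.
  destruct (Bool.bool_dec (h' z) y) as [|Hn]; [assumption|].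
  exfalso; apply NW; exists h'; auto.
Qed.

Lemma four_point_certificate h u0 t0 S y p1 p2 p3 p4 :
  represents h u0 t0 -> (forall x y, S (x, y) -> h x = y) ->
  S (p1, y) -> S (p2, y) -> S (p3, y) -> S (p4, y) ->
  across p1 < across p2 -> across p2 < across p3 -> across p3 < across p4 ->
  certificate (halfspace_class sp sm) sigma 3 h S.
Proof.
  intros R0 Hlab S1 S2 S3 S4 L12 L23 L34.
  assert (Hneq : forall p q, across p < across q -> p <> q) by (intros p q H ->; lra).
  pose proof (Hneq _ _ L12) as n12; pose proof (Hneq _ _ L23) as n23.
  pose proof (Hneq _ _ L34) as n34.
  assert (n13 : p1 <> p3) by (apply Hneq; lra).
  assert (n24 : p2 <> p4) by (apply Hneq; lra).
  destruct (certificate_or_dip h S y p1 p2 p3) as [|(h2 & C2 & H21 & H22 & H23)];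
    auto; try congruence.
  destruct (certificate_or_dip h S y p2 p3 p4) as [|(h3 & C3 & H32 & H33 & H34)];
    auto; try congruence.
  destruct (halfspace_normal_form h2 C2) as (u2 & t2 & R2).
  destruct (halfspace_normal_form h3 C3) as (u3 & t3 & R3).
  destruct (labels_dip h2 u2 t2 y p1 p2 p3 R2 H21 H22 H23) as [D12 D23].
  destruct (labels_dip h3 u3 t3 y p2 p3 p4 R3 H32 H33 H34) as [E23 E34].
  destruct (Rle_or_lt 0 (signed y (gap u0 p2 p3))) as [G0 | G0].
  - apply (certificate_of_triple _ _ h S (p2, y) (p3, y) (p4, y)); auto; try congruence.
    simpl; intros h' Ch' H2 H3 Hsig.
    destruct (halfspace_normal_form h' Ch') as (u & t & R).
    apply (sigma_pair_agree h h' u0 t0 u t y p2 p3 R0 R (Hlab _ _ S2) H2 L23) in Hsig.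
    apply Hsig in G0.
    pose proof (gap_transfer y u u3 p2 p3 p3 p4 L23 L34).
    apply (label_mono h' u t y p3 p4 R H3); lra.
  - apply (certificate_of_triple _ _ h S (p2, y) (p3, y) (p1, y)); auto; try congruence.
    simpl; intros h' Ch' H2 H3 Hsig.
    destruct (halfspace_normal_form h' Ch') as (u & t & R).
    apply (sigma_pair_agree h h' u0 t0 u t y p2 p3 R0 R (Hlab _ _ S2) H2 L23) in Hsig.
    assert (G : signed y (gap u p2 p3) < 0) by (apply Rnot_le_lt; rewrite Hsig; lra).
    pose proof (gap_transfer y u2 u p2 p3 p1 p2 L23 L12).
    apply (label_mono h' u t y p2 p1 R H2); rewrite gap_swap, signed_opp; lra.
Qed.

End Halfspaces.

Theorem lemmaD1 (sp sm : pt) :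
  sp <> sm -> cert_dim (halfspace_class sp sm) 3 7 3.
Proof.
  intros Hne; exists (sigma sp sm); split.
  { intros h P; pose proof (sigma_lt_2 sp sm h P); lia. }
  intros h Hh S Hcard Hlab.
  change (certificate (halfspace_class sp sm) (sigma sp sm) 3 h S).
  destruct (halfspace_normal_form sp sm Hne h Hh) as (u0 & t0 & R0).
  destruct (four_points_same_label S Hcard) as (y & ps & Hnd & Hlen & Hps).
  destruct (equal_keys_or_increasing4 pt (across sp sm) ps Hnd Hlen)
    as [(a & b & c & Ha & Hb & Hc & nab & nca & ncb & Hab)
       | (p1 & p2 & p3 & p4 & I1 & I2 & I3 & I4 & L12 & L23 & L34)].
  - exact (equal_across_certificate sp sm Hne h S y a b c Hlab
             (Hps a Ha) (Hps b Hb) (Hps c Hc) nab nca ncb Hab).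
  - exact (four_point_certificate sp sm Hne h u0 t0 S y p1 p2 p3 p4 R0 Hlab
             (Hps p1 I1) (Hps p2 I2) (Hps p3 I3) (Hps p4 I4) L12 L23 L34).
Qed.
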